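(* Let $G=S_n$ and $H=S_b\wr S_a$ (the stabiliser of a partition of $\{1,\dots,n\}$ into $a$ blocks of size $b$), where $n=ab$, $a=b+1$ and $b\geqslant 3$. Then $b(G,H)=3$.
   Context: For a subgroup $H\leqslant G$, $H_G=\bigcap_{g\in G}H^g$ is the core of $H$, and $b(G,H)=\min\{|S| : S\subseteq G,\ \bigcap_{g\in S}H^g=H_G\}$. Equivalently here, $b(G,H)$ is the minimal number of partitions of $\{1,\dots,n\}$ into $a$ parts of size $b$ whose common stabiliser in $S_n$ is trivial. *)

From mathcomp Require Import all_boot all_fingroup.
Set Implicit Arguments. Unset Strict Implicit. Unset Printing Implicit Defensive.


Definition core (gT : finGroupType) (G H : {set gT}) : {set gT} :=
  \bigcap_(g in G) (H :^ g)%g.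

(* S is a subset of G realising the core: \bigcap_{g in S} H^g = H_G.
   b(G,H) is the least cardinality of such an S. *)
Definition is_base_set (gT : finGroupType) (G H S : {set gT}) : Prop :=
  S \subset G /\ \bigcap_(g in S) (H :^ g)%g = core G H.

Definition std_partition (n a b : nat) : {set {set 'I_n}} :=
  [set [set i : 'I_n | i %/ b == k] | k : 'I_a].

Definition partition_stab (n : nat) (P : {set {set 'I_n}}) : {set {perm 'I_n}} :=
  [set g : {perm 'I_n} | [set (fun x => g x) @: B | B : {set 'I_n} in P] == P].

(* Both sides are phrased through labelings: the conjugate H^(g^-1) of the
   stabiliser H of the standard partition is the set of permutations that
   preserve the partition into the fibres of u |-> (g u) / b.
   - Lower bound: any two partitions of a set into b+1 classes of size b admit
     a common nontrivial symmetry (swap two points carrying the same pair of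
     labels, or else, the labelings being an injective grid with one hole per
     row and column, swap two rows together with their two hole columns).
     Hence no set of two conjugates of H intersects trivially.
   - Upper bound: on the b+1 by b grid, the rows, the diagonals
     row + col = const (mod b+1), and the rows "twisted" along a transversal
     X = {x_0,...,x_b} are three such partitions whose common stabiliser is
     trivial.  The twisted partition lets one recognise X and the successor
     x_q |-> x_(q+1) on it; the diagonals then pin down x_0, hence all of X,
     hence every row and diagonal, hence every point. *)

From mathcomp Require Import all_boot all_fingroup zify.
Set Implicit Arguments. Unset Strict Implicit. Unset Printing Implicit Defensive.

Definition preserves (T : finType) (L : eqType) (lab : T -> L) (h : {perm T}) :=
  forall u v, (lab u == lab v) = (lab (h u) == lab (h v)).

Lemma preservesV (T : finType) (L : eqType) (lab : T -> L) (h : {perm T}) :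
  preserves lab h -> preserves lab h^-1.
Proof. by move=> ph u v; rewrite [RHS]ph !permKV. Qed.

Lemma eq_preserves (T : finType) (L : eqType) (lab1 lab2 : T -> L) (h : {perm T}) :
  lab1 =1 lab2 -> preserves lab1 h -> preserves lab2 h.
Proof. by move=> e ph u v; rewrite -!e. Qed.

Lemma preserves_inj (T : finType) (L L' : eqType) (f : L -> L') (lab : T -> L)
    (h : {perm T}) :
  injective f -> preserves lab h -> preserves (f \o lab) h.
Proof. by move=> fi ph u v; rewrite /= !(inj_eq fi). Qed.

Lemma set_in_pair (T : finType) (A : {set T}) (x0 : T) :
  #|A| <= 2 -> exists y1 y2, A \subset [set y1; y2].
Proof.
rewrite cardE => sizeA; exists (nth x0 (enum A) 0), (nth x0 (enum A) 1).
apply/subsetP => y; rewrite -mem_enum !inE.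
case: (enum A) sizeA => [|y1 [|y2 [|? ?]]] //=; rewrite !inE ?orbF //.
by move=> _ ->.
Qed.

Lemma card_set3 (T : finType) (x y z : T) : #|[set x; y; z]| <= 3.
Proof. by rewrite setUC !cardsU1 cards1; do 2 case: (_ \notin _). Qed.

Section Blocks.
Variables (n a b : nat).
Hypotheses (hn : n = a * b) (hb : 0 < b).

Definition block (k : nat) : {set 'I_n} := [set i : 'I_n | i %/ b == k].

Lemma mem_block k u : (u \in block k) = (u %/ b == k).
Proof. by rewrite inE. Qed.

Lemma block_lt (u : 'I_n) : u %/ b < a.
Proof. by rewrite ltn_divLR // -hn. Qed.

Lemma std_partitionE : std_partition n a b = [set block (u %/ b) | u : 'I_n].
Proof.
apply/setP => B; apply/imsetP/imsetP => [[k _ ->] | [u _ ->]].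
  have kb : k * b < n by rewrite hn ltn_pmul2r.
  by exists (Ordinal kb); rewrite //= mulnK.
by exists (Ordinal (block_lt u)).
Qed.

Lemma block_inj (u v : 'I_n) : block (u %/ b) = block (v %/ b) -> u %/ b = v %/ b.
Proof. by move=> e; apply/eqP; rewrite -mem_block -e mem_block. Qed.

Lemma image_block (h : {perm 'I_n}) (u : 'I_n) :
  preserves (fun w : 'I_n => w %/ b) h -> h @: block (u %/ b) = block (h u %/ b).
Proof.
move=> ph; apply/setP => y; rewrite mem_block.
apply/imsetP/idP => [[w] | hy]; first by rewrite mem_block ph => ? ->.
by exists ((h^-1)%g y); rewrite ?permKV // mem_block ph permKV.
Qed.

Lemma stab_preserves (h : {perm 'I_n}) :
  (h \in partition_stab (std_partition n a b)) <-> preserves (fun u : 'I_n => u %/ b) h.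
Proof.
rewrite inE std_partitionE; split => [/eqP stab | ph].
  have imb (u : 'I_n) : h @: block (u %/ b) = block (h u %/ b).
    have : h @: block (u %/ b) \in [set block (w %/ b) | w : 'I_n].
      by rewrite -[in X in _ \in X]stab; apply: imset_f; apply: imset_f.
    case/imsetP => w _ e; rewrite e; congr block; apply/esym/eqP.
    by rewrite -mem_block -e imset_f // mem_block.
  move=> u v; apply/eqP/eqP => e; apply: block_inj; first by rewrite -!imb e.
  apply: (imset_inj (@perm_inj _ h)); by rewrite !imb e.
apply/eqP/setP => B; apply/imsetP/imsetP => [[C /imsetP [u _ ->] ->] | [u _ ->]].
  by exists (h u); rewrite // image_block.
exists (block ((h^-1)%g u %/ b)); first exact: imset_f.
by rewrite image_block // permKV.
Qed.

Lemma conjV_stab_preserves (g h : {perm 'I_n}) :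
  (h \in partition_stab (std_partition n a b) :^ g^-1)%g <->
  preserves (fun u : 'I_n => g u %/ b) h.
Proof.
rewrite mem_conjgV stab_preserves; split => ph u v.
  by have := ph (g u) (g v); rewrite /conjg !permM !permK.
by have := ph ((g^-1)%g u) ((g^-1)%g v); rewrite /conjg !permM !permKV.
Qed.

Lemma card_block k : k < a -> #|block k| = b.
Proof.
move=> ka; have kj (j : 'I_b) : k * b + j < n by have := ltn_ord j; rewrite hn; nia.
pose pt j := Ordinal (kj j).
have -> : block k = [set pt j | j : 'I_b].
  apply/setP => u; rewrite mem_block; apply/eqP/imsetP => [e | [j _ ->]].
    exists (Ordinal (ltn_pmod u hb)) => //.
    by apply/val_inj; rewrite /= {1}(divn_eq u b) e.
  by rewrite /= divnMDl // divn_small ?addn0.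
by rewrite card_imset ?card_ord // => j1 j2 /(congr1 val) /= /addnI /val_inj.
Qed.

End Blocks.

Lemma one_missing (T : finType) (b : nat) (K1 K2 : T -> 'I_b.+1) :
  (forall r, #|[set u | K1 u == r]| = b) ->
  (forall u v, K1 u = K1 v -> K2 u = K2 v -> u = v) ->
  forall r, exists c, forall c', [exists u, (K1 u == r) && (K2 u == c')] = (c' != c).
Proof.
move=> fibre inj r; set F := [set u | K1 u == r].
have cardK2F : #|K2 @: F| = b.
  rewrite card_in_imset ?fibre // => u v; rewrite !inE => /eqP ur /eqP vr.
  by apply: inj; rewrite ur vr.
have /cards1P [c Ec] : #|~: (K2 @: F)| == 1.
  by rewrite cardsCs setCK card_ord cardK2F subSnn.
exists c => c'; have -> : (c' != c) = (c' \in K2 @: F) by rewrite -[_ @: F]setCK Ec !inE.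
apply/existsP/imsetP => [[u /andP [/eqP ur /eqP uc]] | [u]].
  by exists u; rewrite ?inE ?ur.
by rewrite inE => ur ->; exists u; rewrite ur eqxx.
Qed.

Section CommonSymmetry.
Variables (T : finType) (b : nat) (L1 L2 : T -> 'I_b.+1).
Hypotheses (hb : 0 < b)
  (fibre1 : forall r, #|[set u | L1 u == r]| = b)
  (fibre2 : forall c, #|[set u | L2 u == c]| = b).

Lemma twins_symmetry u v : u != v -> L1 u = L1 v -> L2 u = L2 v ->
  exists z : {perm T}, [/\ z != 1%g, preserves L1 z & preserves L2 z].
Proof.
move=> uv e1 e2.
have fixes (L : T -> 'I_b.+1) : L u = L v -> preserves L (tperm u v).
  move=> e; have Lt w : L (tperm u v w) = L w by case: tpermP => [->|->|].
  by move=> x y; rewrite !Lt.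
exists (tperm u v); split; [|exact: fixes L1 e1|exact: fixes L2 e2].
by apply/eqP => /permP /(_ u); rewrite perm1 tpermL => /eqP; rewrite eq_sym (negbTE uv).
Qed.

Definition occupied r c := [exists u, (L1 u == r) && (L2 u == c)].

Section InjectiveGrid.
Hypothesis inj : forall u v, L1 u = L1 v -> L2 u = L2 v -> u = v.

Lemma hole_map : exists2 m : 'I_b.+1 -> 'I_b.+1,
  injective m & forall r c, occupied r c = (c != m r).
Proof.
have [m mP] := fin_all_exists (one_missing fibre1 inj).
exists m => // r1 r2 e.
have [r0 r0P] := @one_missing T b L2 L1 fibre2 (fun u v e2 e1 => inj e1 e2) (m r1).
have occ r : [exists u, (L2 u == m r1) && (L1 u == r)] = occupied r (m r1).
  by apply: eq_existsb => u; rewrite andbC.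
have := r0P r1; have := r0P r2; rewrite !occ /occupied !mP e eqxx.
by move=> /esym/negbFE/eqP -> /esym/negbFE/eqP ->.
Qed.

Lemma lift_cell_perm (al be : {perm 'I_b.+1}) :
  (forall r c, occupied (al r) (be c) = occupied r c) ->
  exists z : {perm T}, forall u, L1 (z u) = al (L1 u) /\ L2 (z u) = be (L2 u).
Proof.
move=> occ_al_be.
pose zf u := odflt u [pick v | (L1 v == al (L1 u)) && (L2 v == be (L2 u))].
have zfP u : L1 (zf u) = al (L1 u) /\ L2 (zf u) = be (L2 u).
  rewrite /zf; case: pickP => [v /andP [/eqP -> /eqP ->] // | none].
  have /existsP [v] : occupied (al (L1 u)) (be (L2 u)).
    by rewrite occ_al_be; apply/existsP; exists u; rewrite !eqxx.
  by rewrite none.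
have zf_inj : injective zf.
  move=> u v e; have [e1 e2] := zfP u; have [f1 f2] := zfP v.
  apply: inj; first by apply: (@perm_inj _ al); rewrite -e1 -f1 e.
  by apply: (@perm_inj _ be); rewrite -e2 -f2 e.
by exists (perm zf_inj) => u; rewrite permE.
Qed.

(* Swapping two rows together with the columns of their empty cells. *)
Lemma grid_symmetry :
  exists z : {perm T}, [/\ z != 1%g, preserves L1 z & preserves L2 z].
Proof.
have [m m_inj mP] := hole_map.
set r0 : 'I_b.+1 := ord0; set r1 : 'I_b.+1 := inord 1.
have r01 : r0 != r1 by rewrite -val_eqE /= inordK // ltnS.
pose al := tperm r0 r1; pose be := tperm (m r0) (m r1).
have m_al r : m (al r) = be (m r).
  rewrite /al /be; case: tpermP => [-> | -> | /eqP r_0 /eqP r_1]; rewrite ?tpermL ?tpermR //.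
  by rewrite tpermD // (inj_eq m_inj) eq_sym.
have [z zP] : exists z : {perm T},
    forall u, L1 (z u) = al (L1 u) /\ L2 (z u) = be (L2 u).
  by apply: lift_cell_perm => r c; rewrite !mP m_al (inj_eq perm_inj).
exists z; split.
- have /card_gt0P [u] : 0 < #|[set u | L1 u == r0]| by rewrite fibre1.
  rewrite inE => /eqP ur0; apply/eqP => /permP /(_ u); rewrite perm1 => zu.
  have [z1 _] := zP u; move: z1; rewrite zu ur0 /al tpermL => /eqP.
  by rewrite (negbTE r01).
- by move=> u v; have [-> _] := zP u; have [-> _] := zP v; rewrite (inj_eq perm_inj).
- by move=> u v; have [_ ->] := zP u; have [_ ->] := zP v; rewrite (inj_eq perm_inj).
Qed.

End InjectiveGrid.

(* Either two points share both labels, or the labels form an injective grid. *)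
Lemma common_symmetry :
  exists z : {perm T}, [/\ z != 1%g, preserves L1 z & preserves L2 z].
Proof.
case: (pickP [pred uv : T * T |
          [&& uv.1 != uv.2, L1 uv.1 == L1 uv.2 & L2 uv.1 == L2 uv.2]]).
  by move=> [u v] /and3P [uv /eqP e1 /eqP e2]; apply: (twins_symmetry uv).
move=> none; apply: grid_symmetry => u v e1 e2; apply/eqP.
by apply: contraFT (none (u, v)) => uv; rewrite /= uv e1 e2 !eqxx.
Qed.

End CommonSymmetry.

Section Grid.
Variables (b n : nat).
Hypotheses (hb : 3 <= b) (hn : n = b.+1 * b).

Let b_gt0 : 0 < b := ltnW (ltnW hb).

Definition row (u : 'I_n) : nat := u %/ b.
Definition col (u : 'I_n) : nat := u %% b.

Lemma row_lt u : row u < b.+1.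
Proof. by rewrite ltn_divLR // -hn. Qed.

Lemma col_lt u : col u < b.
Proof. exact: ltn_pmod. Qed.

Lemma row_col_inj u v : row u = row v -> col u = col v -> u = v.
Proof.
move=> er ec; apply/val_inj.
by rewrite /= (divn_eq u b) (divn_eq v b) -/(row _) er -/(col _) ec.
Qed.

Lemma point_lt q r : q < b.+1 -> r < b -> q * b + r < n.
Proof. by rewrite hn; nia. Qed.

Definition point q r : 'I_n := insubd (Ordinal (point_lt (ltn0Sn b) b_gt0)) (q * b + r).

Lemma val_point q r : q < b.+1 -> r < b -> val (point q r) = q * b + r.
Proof. by move=> hq hr; rewrite val_insubd point_lt. Qed.

Lemma row_point q r : q < b.+1 -> r < b -> row (point q r) = q.
Proof. by move=> hq hr; rewrite /row val_point // divnMDl // divn_small ?addn0. Qed.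

Lemma col_point q r : q < b.+1 -> r < b -> col (point q r) = r.
Proof. by move=> hq hr; rewrite /col val_point // modnMDl modn_small. Qed.

Lemma addn_mod_inj x y k : x < b.+1 -> y < b.+1 ->
  (x + k) %% b.+1 = (y + k) %% b.+1 -> x = y.
Proof. by move=> hx hy /eqP; rewrite eqn_modDr !modn_small // => /eqP. Qed.

Definition nextr q := q.+1 %% b.+1.

Lemma nextr_lt q : nextr q < b.+1.
Proof. exact: ltn_mod. Qed.

Lemma nextrE q : q < b.+1 -> nextr q = if q < b then q.+1 else 0.
Proof.
move=> hq; rewrite /nextr; case: ifP => qb; first by rewrite modn_small.
have -> : q = b by lia.
by rewrite modnn.
Qed.

Lemma nextr_inj p q : p < b.+1 -> q < b.+1 -> nextr p = nextr q -> p = q.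
Proof. by move=> hp hq; rewrite /nextr -[p.+1]addn1 -[q.+1]addn1; apply: addn_mod_inj. Qed.

Definition tcol q := if q < b then 0 else 1.
Definition xpt q := point q (tcol q).
Definition inX u := col u == tcol (row u).

Lemma tcol_lt q : tcol q < b.
Proof. by rewrite /tcol; case: ifP; lia. Qed.

Lemma row_xpt q : q < b.+1 -> row (xpt q) = q.
Proof. by move=> hq; rewrite row_point ?tcol_lt. Qed.

Lemma inX_xpt q : q < b.+1 -> inX (xpt q).
Proof. by move=> hq; rewrite /inX row_xpt // col_point ?tcol_lt. Qed.

Lemma inX_point q r : q < b.+1 -> r < b -> inX (point q r) = (r == tcol q).
Proof. by move=> hq hr; rewrite /inX row_point // col_point. Qed.

Lemma inXE u : inX u -> u = xpt (row u).
Proof.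
move=> /eqP ec; apply: row_col_inj; first by rewrite row_xpt ?row_lt.
by rewrite col_point ?tcol_lt ?row_lt.
Qed.

Definition diag u := (row u + col u + 1) %% b.+1.
Definition twist u := if inX u then nextr (row u) else row u.

Lemma diag_lt u : diag u < b.+1.
Proof. exact: ltn_mod. Qed.

Lemma diag_col_inj u v : diag u = diag v -> col u = col v -> u = v.
Proof.
move=> ed ec; apply: row_col_inj => //; move: ed; rewrite /diag -!addnA ec.
by apply: addn_mod_inj; apply: row_lt.
Qed.

Lemma diag_row_inj u v : diag u = diag v -> row u = row v -> u = v.
Proof.
move=> ed er; apply: row_col_inj => //; move: ed; rewrite /diag er -!addnA => /eqP.
by rewrite eqn_modDl !modn_small ?addn1 ?ltnS ?col_lt // => /eqP; lia.
Qed.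

Lemma diag_xpt q : q < b.+1 -> diag (xpt q) = if q < b then q.+1 else 1.
Proof.
move=> hq; rewrite /diag row_xpt // col_point ?tcol_lt // /tcol.
case: ifP => qb; first by rewrite addn0 addn1 modn_small.
have -> : q + 1 + 1 = 1 + b.+1 by lia.
by rewrite modnDr modn_small; lia.
Qed.

Lemma twist_xpt q : q < b.+1 -> twist (xpt q) = nextr q.
Proof. by move=> hq; rewrite /twist inX_xpt // row_xpt. Qed.

Lemma nextr_neq q : q < b.+1 -> nextr q != q.
Proof. by move=> hq; rewrite nextrE //; case: ifP; lia. Qed.

(* u is linked to v when the twist-class of u contains a point other than u
   in the row of v; this relation identifies X and the cyclic successor on X. *)
Definition linked u v := exists w, [/\ w != u, twist w = twist u & row w = row v].

Lemma linked_perm h u v : preserves row h -> preserves twist h ->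
  linked u v -> linked (h u) (h v).
Proof.
move=> prow ptwist [w [wu tw rw]]; exists (h w); split.
- by rewrite (inj_eq perm_inj).
- by apply/eqP; rewrite -ptwist; apply/eqP.
- by apply/eqP; rewrite -prow; apply/eqP.
Qed.

Lemma linked_xpt q v : q < b.+1 -> inX v -> linked (xpt q) v <-> v = xpt (nextr q).
Proof.
move=> hq Xv; rewrite /linked twist_xpt //; split => [[w [wq tw rw]] | ->].
  case Xw: (inX w); move: tw; rewrite /twist Xw => tw.
    move/nextr_inj: tw => /(_ (row_lt w) hq) rwq.
    by case/eqP: wq; rewrite (inXE Xw) rwq.
  by rewrite (inXE Xv) -rw tw.
have h2 : 2 < b by [].
have ntcol : 2 != tcol (nextr q) by rewrite /tcol; case: ifP.
exists (point (nextr q) 2); split.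
- apply: contra_neq (nextr_neq hq) => /(congr1 row).
  by rewrite row_point ?nextr_lt // row_xpt.
- by rewrite /twist inX_point ?nextr_lt // (negbTE ntcol) row_point ?nextr_lt.
- by rewrite row_point ?row_xpt ?nextr_lt.
Qed.

Lemma linked_self u : linked u u <-> ~~ inX u.
Proof.
split => [| nXu].
  apply: contraPN => Xu; rewrite {1}(inXE Xu) linked_xpt ?row_lt // => /(congr1 row).
  by rewrite row_xpt ?nextr_lt // => /esym/eqP; rewrite (negbTE (nextr_neq (row_lt u))).
set r := if col u == 2 then 1 - tcol (row u) else 2.
have tcol1 : tcol (row u) <= 1 by rewrite /tcol; case: ifP.
have hr : r < b by rewrite /r; case: ifP; lia.
have hcol : col u != r by rewrite /r; case: (col u =P 2); lia.
have htcol : r != tcol (row u) by rewrite /r; case: ifP; lia.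
exists (point (row u) r); split.
- by apply: contra_neq hcol => <-; rewrite col_point ?row_lt.
- by rewrite /twist inX_point ?row_lt // (negbTE htcol) (negbTE nXu) row_point ?row_lt.
- by rewrite row_point ?row_lt.
Qed.

Section Rigidity.
Variable h : {perm 'I_n}.
Hypotheses (prow : preserves row h) (pdiag : preserves diag h)
  (ptwist : preserves twist h).

(* h maps X into X, since X consists of the points not linked to themselves. *)
Lemma rigid_inX u : inX u -> inX (h u).
Proof.
move=> Xu; apply/negPn/negP => /linked_self.
move/(linked_perm (preservesV prow) (preservesV ptwist)); rewrite permK.
by move/linked_self; rewrite Xu.
Qed.

(* x_0 and x_b form the only pair of X on one diagonal, and x_b is linked to
   x_0 but not conversely; hence h fixes x_0. *)
Lemma rigid_x0 : h (xpt 0) = xpt 0.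
Proof.
have Xy := rigid_inX (inX_xpt (ltn0Sn b)); have Xz := rigid_inX (inX_xpt (ltnSn b)).
set y := h (xpt 0) in Xy *; set z := h (xpt b) in Xz.
have dyz : diag y = diag z.
  by apply/eqP; rewrite -pdiag !diag_xpt // b_gt0 ltnn.
have ryz : row y != row z.
  apply: contra_neq (nextr_neq (ltn0Sn b)) => ryz.
  have /perm_inj/(congr1 row) : y = z by rewrite (inXE Xy) (inXE Xz) ryz.
  by rewrite !row_xpt //; lia.
rewrite (inXE Xy) (inXE Xz) !diag_xpt ?row_lt // in dyz.
have [ry0 | [ryb rz0]] : row y = 0 \/ row y = b /\ row z = 0.
    by move: dyz ryz (row_lt y) (row_lt z); case: ifP; case: ifP; lia.
  by rewrite (inXE Xy) ry0.
have : linked (xpt b) (xpt 0) by apply/linked_xpt; rewrite ?inX_xpt // /nextr modnn.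
move/(linked_perm prow ptwist); rewrite -/y -/z (inXE Xy) (inXE Xz) ryb rz0.
move/linked_xpt => /(_ (ltn0Sn b) (inX_xpt (ltnSn b))) /(congr1 row).
by rewrite !row_xpt ?nextr_lt // nextrE // b_gt0; lia.
Qed.

(* Since h commutes with the successor on X, it fixes X pointwise. *)
Lemma rigid_X q : q < b.+1 -> h (xpt q) = xpt q.
Proof.
elim: q => [_ | q IH hq]; first exact: rigid_x0.
have hq' : q < b.+1 by apply: ltnW.
have next : nextr q = q.+1 by rewrite nextrE // -ltnS hq.
have : linked (xpt q) (xpt q.+1) by apply/linked_xpt; rewrite ?inX_xpt // next.
move/(linked_perm prow ptwist); rewrite IH //.
by move/linked_xpt => /(_ hq' (rigid_inX (inX_xpt hq))); rewrite next.
Qed.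

(* Every row and every nonzero diagonal contains a point of X, so h fixes
   all rows and diagonals, and therefore every point. *)
Lemma rigid : h = 1%g.
Proof.
apply/permP => u; rewrite perm1.
have hrow : row (h u) = row u.
  have := prow u (xpt (row u)).
  by rewrite rigid_X ?row_lt // row_xpt ?row_lt // eqxx => /esym/eqP.
have hdiag_pos c : 0 < c < b.+1 -> (diag u == c) = (diag (h u) == c).
  move=> /andP [c0 cb]; have hc : c.-1 < b.+1 by lia.
  have dc : diag (xpt c.-1) = c by rewrite diag_xpt //; case: ifP; lia.
  by have := pdiag u (xpt c.-1); rewrite rigid_X // dc.
have hdiag : diag (h u) = diag u.
  have [du0 | dupos] := posnP (diag u).
    have [-> // | dhpos] := posnP (diag (h u)).
    have := hdiag_pos (diag (h u)); rewrite dhpos diag_lt du0 eqxx eq_sym.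
    by move=> /(_ isT) /eqP; lia.
  by apply/eqP; rewrite -hdiag_pos ?dupos ?diag_lt.
exact: diag_row_inj.
Qed.

End Rigidity.

(* Permutations whose block labelings u |-> g u / b are [diag] and [twist];
   the conjugates H^(g^-1) by them are the stabilisers of the diagonal and
   twisted partitions. *)
Definition diag_fun u := point (diag u) (col u).

Lemma row_diag_fun u : row (diag_fun u) = diag u.
Proof. by rewrite row_point ?diag_lt ?col_lt. Qed.

Lemma diag_fun_inj : injective diag_fun.
Proof.
move=> u v e; apply: diag_col_inj; first by rewrite -!row_diag_fun e.
by have := congr1 col e; rewrite !col_point ?diag_lt ?col_lt.
Qed.

Definition diag_perm : {perm 'I_n} := perm diag_fun_inj.

Lemma diag_perm_block u : diag_perm u %/ b = diag u.
Proof. by rewrite permE; exact: row_diag_fun. Qed.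

Definition twist_fun u := if inX u then xpt (nextr (row u)) else u.

Lemma row_twist_fun u : row (twist_fun u) = twist u.
Proof. by rewrite /twist_fun /twist; case: ifP; rewrite ?row_xpt ?nextr_lt. Qed.

Lemma inX_twist_fun u : inX (twist_fun u) = inX u.
Proof. by rewrite /twist_fun; case: ifP => // _; rewrite inX_xpt ?nextr_lt. Qed.

Lemma twist_fun_inj : injective twist_fun.
Proof.
move=> u v e; have := inX_twist_fun u; rewrite e inX_twist_fun => Xuv.
move: e; rewrite /twist_fun -Xuv; case: ifP => // Xu /(congr1 row).
rewrite !row_xpt ?nextr_lt // => /(nextr_inj (row_lt u) (row_lt v)) ruv.
by rewrite (inXE Xu) -ruv -inXE // -Xuv.
Qed.

Definition twist_perm : {perm 'I_n} := perm twist_fun_inj.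

Lemma twist_perm_block u : twist_perm u %/ b = twist u.
Proof. by rewrite permE; exact: row_twist_fun. Qed.

End Grid.

Section BaseSize.
Variables (b n : nat).
Hypotheses (hb : 3 <= b) (hn : n = b.+1 * b).

Let b_gt0 : 0 < b := ltnW (ltnW hb).
Let H := partition_stab (std_partition n b.+1 b).

Lemma one_in_conj (g : {perm 'I_n}) : (1 \in H :^ g)%g.
Proof.
by rewrite -[g]invgK; apply/(conjV_stab_preserves hn b_gt0) => u v; rewrite !perm1.
Qed.

Lemma bigcap_preserves (S : {set {perm 'I_n}}) g (lab : 'I_n -> nat) z :
  g \in S -> (forall u, (g^-1)%g u %/ b = lab u) ->
  z \in \bigcap_(g in S) (H :^ g)%g -> preserves lab z.
Proof.
move=> gS glab /bigcapP /(_ g gS); rewrite -[g]invgK => /conjV_stab_preserves.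
by move=> /(_ hn b_gt0) /(eq_preserves glab).
Qed.

Definition base3 : {set {perm 'I_n}} :=
  [set 1%g; (diag_perm hb hn)^-1; (twist_perm hb hn)^-1]%g.

(* The three conjugates indexed by base3 are the stabilisers of the row,
   diagonal and twisted partitions, which intersect trivially. *)
Lemma base3_trivial : \bigcap_(g in base3) (H :^ g)%g = [set 1%g].
Proof.
apply/setP => z; rewrite inE; apply/idP/eqP => [zin | ->]; last first.
  by apply/bigcapP => g _; apply: one_in_conj.
apply: (rigid hb hn).
- apply: (bigcap_preserves (g := 1%g) _ _ zin); first by rewrite !inE eqxx.
  by move=> u; rewrite invg1 perm1.
- apply: (bigcap_preserves (g := (diag_perm hb hn)^-1%g) _ _ zin).
    by rewrite !inE eqxx orbT.
  by move=> u; rewrite invgK diag_perm_block.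
- apply: (bigcap_preserves (g := (twist_perm hb hn)^-1%g) _ _ zin).
    by rewrite !inE eqxx orbT.
  by move=> u; rewrite invgK twist_perm_block.
Qed.

Lemma core_trivial : core [set: {perm 'I_n}] H = [set 1%g].
Proof.
apply/setP => z; rewrite inE; apply/bigcapP/eqP => [zin | -> g _]; last exact: one_in_conj.
apply/eqP; rewrite -in_set1 -base3_trivial; apply/bigcapP => g _; exact: zin.
Qed.

(* No two conjugates of H intersect trivially, by the common symmetry of the
   two corresponding labelings. *)
Lemma base_card_ge3 (S : {set {perm 'I_n}}) :
  \bigcap_(g in S) (H :^ g)%g = [set 1%g] -> 3 <= #|S|.
Proof.
move=> trivS; rewrite leqNgt; apply/negP => /(set_in_pair 1%g) [y1 [y2 /subsetP sub]].
pose lab (p : {perm 'I_n}) u : 'I_b.+1 := Ordinal (block_lt hn b_gt0 (p u)).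
have fibre p r : #|[set u | lab p u == r]| = b.
  rewrite -[RHS](card_block hn b_gt0 (ltn_ord r)) -[RHS](card_preimset _ (@perm_inj _ p)).
  by apply: eq_card => u; rewrite !inE.
have [z [z1 p1 p2]] := common_symmetry b_gt0 (fibre y1^-1)%g (fibre y2^-1)%g.
have : z \in \bigcap_(g in S) (H :^ g)%g.
  apply/bigcapP => g /sub; rewrite !inE => /orP [] /eqP ->.
    rewrite -[y1]invgK; apply/(conjV_stab_preserves hn b_gt0).
    exact: (preserves_inj val_inj p1).
  rewrite -[y2]invgK; apply/(conjV_stab_preserves hn b_gt0).
  exact: (preserves_inj val_inj p2).
by rewrite trivS inE (negbTE z1).
Qed.

End BaseSize.

Theorem proposition2p5 (n a b : nat) :
  n = (a * b)%N -> a = b.+1 -> 3 <= b ->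
  let G := [set: {perm 'I_n}] in
  let H := partition_stab (std_partition n a b) in
  (exists S : {set {perm 'I_n}}, is_base_set G H S /\ #|S| = 3) /\
  (forall S : {set {perm 'I_n}}, is_base_set G H S -> 3 <= #|S|).
Proof.
move=> hn ha hb G H; subst a.
have base_ge3 S : is_base_set G H S -> 3 <= #|S|.
  by case=> _; rewrite (core_trivial hb hn) => /(base_card_ge3 hb hn).
split=> //; exists (base3 hb hn).
have base : is_base_set G H (base3 hb hn).
  by split; [exact: subsetT | rewrite (core_trivial hb hn) (base3_trivial hb hn)].
by split=> //; apply/eqP; rewrite eqn_leq card_set3 base_ge3.
Qed.
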